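(* For positive integers $\mu,h$, let $X_\mu(h)$ be the supremum of $\frac{1}{\mu}G(A\setminus X)$ over all pairs $(A,X)$ where $A$ is an asymptotic basis with $G(A)\le h$, $X$ is a nonempty finite subset of $A$ with $G(A\setminus X)<\infty$, and $\mu(A,X)=\mu$. Then for every positive integer $\mu$, $$\liminf_{h\to\infty}\frac{X_\mu(h)}{h^2}\ge\frac14.$$
   Context: A set $A\subseteq\mathbb{Z}$ with $|A\cap\mathbb{Z}_{<0}|<\infty$ is an asymptotic basis if for some positive integer $h$ the $h$-fold sumset $hA=\{a_1+\dots+a_h: a_i\in A\}$ contains all but finitely many non-negative integers; the least such $h$ is the order $G(A)$. For a finite set $Y$ of integers, $\mathrm{diam}(Y)=\max Y-\min Y$, and for $X\subseteq A$ finite, $\mu(A,X)=\min_{y\in A\setminus X}\mathrm{diam}(X\cup\{y\})$. *)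

From Stdlib Require Import ZArith List Reals.
Import ListNotations.
Open Scope Z_scope.

Definition fin_neg (A : Z -> Prop) : Prop :=
  exists N : Z, forall a, A a -> -N <= a.

Definition in_sumset (A : Z -> Prop) (h : nat) (n : Z) : Prop :=
  exists l : list Z, length l = h /\ Forall A l /\ fold_right Z.add 0 l = n.

Definition basis_of_order (A : Z -> Prop) (h : nat) : Prop :=
  exists N : Z, forall n : Z, N <= n -> in_sumset A h n.

Definition G_is (A : Z -> Prop) (g : nat) : Prop :=
  (1 <= g)%nat /\ basis_of_order A g /\
  forall k : nat, (1 <= k)%nat -> (k < g)%nat -> ~ basis_of_order A k.

Definition asymptotic_basis (A : Z -> Prop) : Prop :=
  fin_neg A /\ exists h : nat, (1 <= h)%nat /\ basis_of_order A h.

Definition setminus (A : Z -> Prop) (X : list Z) : Z -> Prop :=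
  fun z => A z /\ ~ In z X.

(* diam (X ∪ {y}) = max - min *)
Definition diam_add (X : list Z) (y : Z) : Z :=
  fold_right Z.max y X - fold_right Z.min y X.

Definition mu_is (A : Z -> Prop) (X : list Z) (m : Z) : Prop :=
  (exists y, setminus A X y /\ diam_add X y = m) /\
  (forall y, setminus A X y -> m <= diam_add X y).

(* r is one of the values (1/mu) G(A\X) whose supremum defines X_mu(h) *)
Definition Xmu_value (mu h : nat) (r : R) : Prop :=
  exists (A : Z -> Prop) (X : list Z) (gA g : nat),
    asymptotic_basis A /\ G_is A gA /\ (gA <= h)%nat /\
    X <> [] /\ Forall A X /\
    G_is (setminus A X) g /\
    mu_is A X (Z.of_nat mu) /\
    r = (INR g / INR mu)%R.

From Stdlib Require Import ZArith List Reals Lia Lra Psatz Znumtheory Classical.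
Import ListNotations.
Open Scope Z_scope.

(* Fix mu >= 1 and m >= 1, and put
     L = mu*m + 1,   M = (m+1)*L - 1,   r = M - L,
     B = {0, r} ∪ M*N,   X = {M+1, ..., M+mu},   A = B ∪ X.
   - A is a basis of order 2m+1: after adding m*L, every large n is written in
     mixed radix (M, L) and becomes  a*r + (m*M + C) + M*s  with a <= m and
     0 <= C <= mu*m, where m*M + C is a sum of m elements of [M, M+mu] ⊆ A.
   - B = A \ X has order at least M - m - 1 = mu*(m^2+m) - 1: a sum of k elements
     of B equal to 1 + M*t uses b <= k copies of r, and since L is invertible
     modulo M with inverse m+1, this forces M | b + m + 1.
   - mu(A,X) = mu, realised by y = M, since all other elements of B are <= r
     or >= 2M.
   Taking m = (h-1)/2 gives G(A) <= h and G(A\X)/mu >= m^2 + m - 1 ~ h^2/4.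
   The file first develops a small toolkit on h-fold sumsets and the order G,
   then the construction (section Construction), and finally the estimate. *)

Lemma sum_app (l1 l2 : list Z) :
  fold_right Z.add 0 (l1 ++ l2) = fold_right Z.add 0 l1 + fold_right Z.add 0 l2.
Proof. induction l1; simpl; lia. Qed.

Lemma sum_repeat (k : nat) (x : Z) :
  fold_right Z.add 0 (repeat x k) = Z.of_nat k * x.
Proof. induction k as [|k IH]; [reflexivity|]. rewrite Nat2Z.inj_succ; simpl; rewrite IH; ring. Qed.

Lemma in_sumset_mono (S T : Z -> Prop) (k : nat) (n : Z) :
  (forall z, S z -> T z) -> in_sumset S k n -> in_sumset T k n.
Proof.
  intros HST [l [Hlen [Hl Hsum]]]. exists l. split; [|split]; auto.
  eapply Forall_impl; eauto.
Qed.

Lemma in_sumset_add (S : Z -> Prop) (k1 k2 : nat) (x y : Z) :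
  in_sumset S k1 x -> in_sumset S k2 y -> in_sumset S (k1 + k2) (x + y).
Proof.
  intros [l1 [H1 [F1 S1]]] [l2 [H2 [F2 S2]]]. exists (l1 ++ l2).
  rewrite length_app, sum_app. split; [|split]; [lia| apply Forall_app; auto | lia].
Qed.

Lemma in_sumset_repeat (S : Z -> Prop) (k : nat) (x : Z) :
  S x -> in_sumset S k (Z.of_nat k * x).
Proof.
  intros Hx. exists (repeat x k). rewrite repeat_length, sum_repeat.
  split; [|split]; auto. apply Forall_forall. intros z Hz.
  apply repeat_spec in Hz. now subst.
Qed.

Lemma in_sumset_pad (S : Z -> Prop) (k k' : nat) (n : Z) :
  S 0 -> (k <= k')%nat -> in_sumset S k n -> in_sumset S k' n.
Proof.
  intros H0 Hk Hn. replace k' with (k + (k' - k))%nat by lia.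
  replace n with (n + Z.of_nat (k' - k) * 0) by lia.
  apply in_sumset_add; [exact Hn | now apply in_sumset_repeat].
Qed.

Lemma in_sumset_interval (c0 mu : Z) (c : nat) (C : Z) :
  0 <= C <= mu * Z.of_nat c ->
  in_sumset (fun z => c0 <= z <= c0 + mu) c (Z.of_nat c * c0 + C).
Proof.
  revert C. induction c as [|c IH]; intros C HC.
  - exists []. simpl in *. repeat split; [constructor | lia].
  - rewrite Nat2Z.inj_succ in HC.
    assert (Hmu : 0 <= mu) by nia.
    set (p := Z.min C mu).
    destruct (IH (C - p)) as [l [Hlen [Hl Hsum]]]; [nia|].
    exists (c0 + p :: l). split; [simpl; lia|split; [constructor; auto; lia|]].
    rewrite Nat2Z.inj_succ; simpl. rewrite Hsum. ring.
Qed.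

Lemma basis_mono (S T : Z -> Prop) (k : nat) :
  (forall z, S z -> T z) -> basis_of_order S k -> basis_of_order T k.
Proof.
  intros HST [N HN]. exists N. intros n Hn. eapply in_sumset_mono; eauto.
Qed.

Lemma basis_pad (S : Z -> Prop) (k k' : nat) :
  S 0 -> (k <= k')%nat -> basis_of_order S k -> basis_of_order S k'.
Proof.
  intros H0 Hk [N HN]. exists N. intros n Hn. eapply in_sumset_pad; eauto.
Qed.

Lemma least_exists (P : nat -> Prop) (n : nat) :
  P n -> exists g, P g /\ forall k, P k -> (g <= k)%nat.
Proof.
  induction n as [n IH] using (well_founded_induction Wf_nat.lt_wf). intros Pn.
  destruct (classic (exists k, (k < n)%nat /\ P k)) as [[k [Hk Pk]]|Hnone].
  - exact (IH k Hk Pk).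
  - exists n. split; auto. intros k Pk.
    destruct (Nat.le_gt_cases n k); auto. exfalso; eauto.
Qed.

Lemma G_exists (S : Z -> Prop) (k : nat) :
  (1 <= k)%nat -> basis_of_order S k -> exists g, G_is S g /\ (g <= k)%nat.
Proof.
  intros Hk Hb.
  destruct (least_exists (fun k => (1 <= k)%nat /\ basis_of_order S k) k (conj Hk Hb))
    as [g [[Hg1 Hg2] Hmin]].
  exists g. split; [|now apply Hmin].
  split; [|split]; auto. intros k' Hk1 Hk2 Hb'. specialize (Hmin k' (conj Hk1 Hb')). lia.
Qed.

Lemma G_ext (S T : Z -> Prop) (g : nat) :
  (forall z, S z <-> T z) -> G_is S g -> G_is T g.
Proof.
  intros HST [H1 [H2 H3]]. split; [|split]; auto.
  - eapply basis_mono; [|eauto]. firstorder.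
  - intros k Hk1 Hk2 Hb. apply (H3 k Hk1 Hk2). eapply basis_mono; [|eauto]. firstorder.
Qed.

Lemma fold_max_ge (y : Z) (l : list Z) (z : Z) :
  z = y \/ In z l -> z <= fold_right Z.max y l.
Proof.
  intros Hz. induction l as [|a l IH]; simpl in *; [destruct Hz as [->|[]]; lia|].
  destruct Hz as [->|[->|Hz]];
    [specialize (IH (or_introl eq_refl)) | | specialize (IH (or_intror Hz))]; lia.
Qed.

Lemma fold_max_le (y U : Z) (l : list Z) :
  (forall z, In z l -> z <= U) -> y <= U -> fold_right Z.max y l <= U.
Proof.
  induction l as [|a l IH]; simpl; auto. intros H Hy.
  specialize (IH (fun z Hz => H z (or_intror Hz)) Hy). specialize (H a (or_introl eq_refl)). lia.
Qed.

Lemma fold_min_le (y : Z) (l : list Z) (z : Z) :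
  z = y \/ In z l -> fold_right Z.min y l <= z.
Proof.
  intros Hz. induction l as [|a l IH]; simpl in *; [destruct Hz as [->|[]]; lia|].
  destruct Hz as [->|[->|Hz]];
    [specialize (IH (or_introl eq_refl)) | | specialize (IH (or_intror Hz))]; lia.
Qed.

Lemma fold_min_ge (y U : Z) (l : list Z) :
  (forall z, In z l -> U <= z) -> U <= y -> U <= fold_right Z.min y l.
Proof.
  induction l as [|a l IH]; simpl; auto. intros H Hy.
  specialize (IH (fun z Hz => H z (or_intror Hz)) Hy). specialize (H a (or_introl eq_refl)). lia.
Qed.

Section Construction.

Variables mu m : nat.
Hypothesis mu_pos : (1 <= mu)%nat.
Hypothesis m_pos : (1 <= m)%nat.

Definition base_L : Z := Z.of_nat mu * Z.of_nat m + 1.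
Definition base_M : Z := (Z.of_nat m + 1) * base_L - 1.
Definition base_r : Z := base_M - base_L.

Definition Bset (z : Z) : Prop :=
  z = 0 \/ z = base_r \/ exists j, 0 <= j /\ z = base_M * j.
Definition Xlist : list Z := map (fun j => base_M + Z.of_nat j) (seq 1 mu).
Definition Aset (z : Z) : Prop := Bset z \/ In z Xlist.

Lemma base_M_large : 2 * Z.of_nat mu + 1 <= base_M /\ 1 <= base_L <= base_M.
Proof. unfold base_M, base_L. nia. Qed.

Lemma in_Xlist (z : Z) : In z Xlist <-> base_M + 1 <= z <= base_M + Z.of_nat mu.
Proof.
  unfold Xlist. rewrite in_map_iff. split.
  - intros [j [<- Hj]]. apply in_seq in Hj. lia.
  - intros Hz. exists (Z.to_nat (z - base_M)). split; [lia|]. apply in_seq. lia.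
Qed.

(* B has a gap (M, 2M) which contains X. *)
Lemma Bset_gap (y : Z) : Bset y -> 0 <= y <= base_M \/ 2 * base_M <= y.
Proof.
  pose proof base_M_large as [HM HL].
  intros [->|[->|[j [Hj ->]]]].
  - lia.
  - unfold base_r. lia.
  - destruct (Z_le_gt_dec j 1).
    + left. assert (j = 0 \/ j = 1) as [-> | ->] by lia; lia.
    + right. nia.
Qed.

Lemma setminus_Aset_Xlist (z : Z) : setminus Aset Xlist z <-> Bset z.
Proof.
  pose proof base_M_large as [HM _].
  unfold setminus, Aset. split.
  - intros [[HB|HX] HnX]; [exact HB | contradiction].
  - intros HB. split; [now left|]. rewrite in_Xlist. intros HX.
    destruct (Bset_gap z HB); lia.
Qed.

Lemma Aset_fin_neg : fin_neg Aset.
Proof.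
  pose proof base_M_large as [HM _].
  exists 0. intros a [HB|HX].
  - destruct (Bset_gap a HB); lia.
  - apply in_Xlist in HX. lia.
Qed.

(* mu(A, X) = mu: the best y is M, giving diam {M, ..., M+mu} = mu. *)
Lemma mu_Aset_Xlist : mu_is Aset Xlist (Z.of_nat mu).
Proof.
  pose proof base_M_large as [HM _].
  assert (Hfirst : In (base_M + 1) Xlist) by (apply in_Xlist; lia).
  assert (Hlast : In (base_M + Z.of_nat mu) Xlist) by (apply in_Xlist; lia).
  assert (Hrange : forall z, In z Xlist -> base_M + 1 <= z <= base_M + Z.of_nat mu)
    by (intros z; apply in_Xlist).
  split.
  - exists base_M. unfold diam_add. split.
    + apply setminus_Aset_Xlist. right; right. exists 1. split; [lia | ring].
    + assert (fold_right Z.max base_M Xlist <= base_M + Z.of_nat mu)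
        by (apply fold_max_le; [intros z Hz; apply Hrange in Hz|]; lia).
      assert (base_M <= fold_right Z.min base_M Xlist)
        by (apply fold_min_ge; [intros z Hz; apply Hrange in Hz|]; lia).
      pose proof (fold_max_ge base_M Xlist _ (or_intror Hlast)).
      pose proof (fold_min_le base_M Xlist _ (or_introl eq_refl)).
      lia.
  - intros y Hy. apply setminus_Aset_Xlist in Hy. unfold diam_add.
    destruct (Bset_gap y Hy).
    + pose proof (fold_max_ge y Xlist _ (or_intror Hlast)).
      pose proof (fold_min_le y Xlist _ (or_introl eq_refl)). lia.
    + pose proof (fold_max_ge y Xlist _ (or_introl eq_refl)).
      pose proof (fold_min_le y Xlist _ (or_intror Hfirst)). lia.
Qed.

(* Mixed-radix digits for A: every n >= (2m+1)*M is a*r + (m*M + C) + M*s with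
   a <= m and 0 <= C <= mu*m.  Write n + m*L = t*M + q*L + C and take a = m - q. *)
Lemma Aset_digits (n : Z) :
  (2 * Z.of_nat m + 1) * base_M <= n ->
  exists a C s, 0 <= a <= Z.of_nat m /\ 0 <= C <= Z.of_nat mu * Z.of_nat m /\ 0 <= s /\
    n = a * base_r + (Z.of_nat m * base_M + C) + base_M * s.
Proof.
  pose proof base_M_large as [HM HL]. intros Hn.
  assert (HML : base_M = (Z.of_nat m + 1) * base_L - 1) by reflexivity.
  set (D := n + Z.of_nat m * base_L).
  pose proof (Z.div_mod D base_M ltac:(lia)) as HD.
  pose proof (Z.mod_pos_bound D base_M ltac:(lia)) as HDb.
  set (w := D mod base_M) in *. set (t := D / base_M) in *.
  pose proof (Z.div_mod w base_L ltac:(lia)) as Hw.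
  pose proof (Z.mod_pos_bound w base_L ltac:(lia)) as Hwb.
  set (C := w mod base_L) in *. set (q := w / base_L) in *.
  assert (Hq : 0 <= q <= Z.of_nat m) by nia.
  assert (Ht : 2 * Z.of_nat m + 1 <= t) by nia.
  exists (Z.of_nat m - q), C, (t - 2 * Z.of_nat m + q).
  split; [lia|split; [unfold base_L in Hwb; lia|split; [lia|]]].
  unfold base_r. nia.
Qed.

Lemma Aset_basis (h : nat) : (2 * m + 1 <= h)%nat -> basis_of_order Aset h.
Proof.
  pose proof base_M_large as [HM HL]. intros Hh.
  apply (basis_pad _ (2 * m + 1)); [left; left; reflexivity | exact Hh |].
  exists ((2 * Z.of_nat m + 1) * base_M). intros n Hn.
  destruct (Aset_digits n Hn) as [a [C [s [Ha [HC [Hs ->]]]]]].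
  assert (Hr : in_sumset Aset (Z.to_nat a) (a * base_r)).
  { rewrite <- (Z2Nat.id a) at 2 by lia. apply in_sumset_repeat. left; right; left; reflexivity. }
  assert (HX : in_sumset Aset m (Z.of_nat m * base_M + C)).
  { apply (in_sumset_mono (fun z => base_M <= z <= base_M + Z.of_nat mu));
      [|now apply in_sumset_interval].
    intros z Hz. destruct (Z.eq_dec z base_M) as [->|Hne].
    - left; right; right. exists 1. split; [lia|ring].
    - right. apply in_Xlist. lia. }
  assert (HMs : in_sumset Aset 1 (base_M * s)).
  { replace (base_M * s) with (Z.of_nat 1 * (base_M * s)) by lia.
    apply in_sumset_repeat. left; right; right. eauto. }
  apply (in_sumset_pad _ (Z.to_nat a + m + 1)); [left; left; reflexivity | lia |].
  now apply in_sumset_add; [apply in_sumset_add|].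
Qed.

(* Digits for B: every n >= M*r is b*r + M*q with 0 <= b < M and q >= 0, since r
   is invertible modulo M (r = -L and L*(m+1) = 1 mod M). *)
Lemma Bset_digits (n : Z) :
  base_M * base_r <= n ->
  exists b q, 0 <= b < base_M /\ 0 <= q /\ n = b * base_r + base_M * q.
Proof.
  pose proof base_M_large as [HM HL]. intros Hn.
  assert (HML : base_M = (Z.of_nat m + 1) * base_L - 1) by reflexivity.
  set (a := - (n * (Z.of_nat m + 1))).
  pose proof (Z.div_mod a base_M ltac:(lia)) as Ha.
  pose proof (Z.mod_pos_bound a base_M ltac:(lia)) as Hab.
  set (b := a mod base_M) in *. set (d := a / base_M) in *.
  set (q := - b - n - d * base_L).
  assert (Hnq : n = b * base_r + base_M * q).
  { unfold q, base_r. rewrite HML. unfold a in Ha. nia. }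
  exists b, q. split; [lia|split; [|exact Hnq]].
  assert (Hr : 0 <= base_r) by (unfold base_r; lia).
  assert (b * base_r <= base_M * base_r) by (apply Z.mul_le_mono_nonneg_r; lia).
  apply (Z.mul_nonneg_cancel_l base_M); lia.
Qed.

Lemma Bset_basis : basis_of_order Bset (Z.to_nat base_M).
Proof.
  pose proof base_M_large as [HM HL].
  exists (base_M * base_r). intros n Hn.
  destruct (Bset_digits n Hn) as [b [q [Hb [Hq ->]]]].
  apply (in_sumset_pad _ (Z.to_nat b + 1)); [now left | lia |].
  apply in_sumset_add.
  - rewrite <- (Z2Nat.id b) at 2 by lia. apply in_sumset_repeat. right; left; reflexivity.
  - replace (base_M * q) with (Z.of_nat 1 * (base_M * q)) by lia.
    apply in_sumset_repeat. right; right. eauto.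
Qed.

Lemma Bset_sum_shape (l : list Z) :
  Forall Bset l -> exists b q, 0 <= b <= Z.of_nat (length l) /\
    fold_right Z.add 0 l = b * base_r + base_M * q.
Proof.
  induction 1 as [|x l Hx Hl IH].
  - exists 0, 0. simpl. lia.
  - destruct IH as [b [q [Hb Hsum]]]. simpl length. rewrite Nat2Z.inj_succ. simpl.
    destruct Hx as [->|[->|[j [Hj ->]]]].
    + exists b, q. split; [lia | rewrite Hsum; ring].
    + exists (b + 1), q. split; [lia | rewrite Hsum; ring].
    + exists b, (q + j). split; [lia | rewrite Hsum; ring].
Qed.

(* If 1 + M*t = b*r + M*q with b >= 0, then M | (b+m+1)*L; as gcd(M, L) = 1
   this gives M | b+m+1, so b >= M - m - 1. *)
Lemma Bset_residue (b q t : Z) :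
  0 <= b -> 1 + base_M * t = b * base_r + base_M * q -> base_M - Z.of_nat m - 1 <= b.
Proof.
  pose proof base_M_large as [HM HL]. intros Hb Heq.
  assert (HML : base_M = (Z.of_nat m + 1) * base_L - 1) by reflexivity.
  assert (Hdiv : (base_M | base_L * (b + Z.of_nat m + 1))).
  { exists (b + 1 + q - t). unfold base_r in Heq. nia. }
  assert (Hcop : rel_prime base_M base_L).
  { apply bezout_rel_prime. apply (Bezout_intro _ _ _ (-1) (Z.of_nat m + 1)). lia. }
  assert (Hpos : 0 < b + Z.of_nat m + 1) by lia.
  pose proof (Z.divide_pos_le _ _ Hpos (Gauss _ _ _ Hdiv Hcop)). lia.
Qed.

Lemma Bset_order_lower (k : nat) :
  basis_of_order Bset k -> base_M - Z.of_nat m - 1 <= Z.of_nat k.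
Proof.
  pose proof base_M_large as [HM HL]. intros [N HN].
  destruct (HN (1 + base_M * Z.abs N)) as [l [Hlen [Hl Hsum]]]; [nia|].
  destruct (Bset_sum_shape l Hl) as [b [q [Hb Hsum']]].
  pose proof (Bset_residue b q (Z.abs N) ltac:(lia) ltac:(congruence)). lia.
Qed.

End Construction.

Lemma Xmu_value_construction (mu m h : nat) :
  (1 <= mu)%nat -> (1 <= m)%nat -> (2 * m + 1 <= h)%nat ->
  exists r : R, Xmu_value mu h r /\ (INR m * INR m + INR m - 1 <= r)%R.
Proof.
  intros Hmu Hm Hh.
  pose proof (base_M_large mu m Hmu Hm) as [HM _].
  assert (Hh1 : (1 <= h)%nat) by lia.
  assert (HM1 : (1 <= Z.to_nat (base_M mu m))%nat) by lia.
  destruct (G_exists _ _ Hh1 (Aset_basis mu m Hmu Hm h Hh)) as [gA [HgA HgAh]].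
  destruct (G_exists _ _ HM1 (Bset_basis mu m Hmu Hm)) as [gB [HgB _]].
  assert (Hlow : (mu * (m * m + m) <= gB + 1)%nat).
  { pose proof (Bset_order_lower mu m Hmu Hm gB (proj1 (proj2 HgB))) as Hk.
    unfold base_M, base_L in Hk. nia. }
  exists (INR gB / INR mu)%R. split.
  - exists (Aset mu m), (Xlist mu m), gA, gB.
    split.
    { split; [exact (Aset_fin_neg mu m Hmu Hm)|].
      exists h. split; [lia | now apply Aset_basis]. }
    split; [exact HgA|]. split; [exact HgAh|]. split.
    { unfold Xlist. destruct mu; [lia | discriminate]. }
    split; [apply Forall_forall; intros x Hx; now right|].
    split.
    { apply (G_ext (Bset mu m)); [|exact HgB].
      intros z. symmetry. exact (setminus_Aset_Xlist mu m Hmu Hm z). }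
    split; [exact (mu_Aset_Xlist mu m Hmu Hm) | reflexivity].
  - apply le_INR in Hlow. rewrite plus_INR, !mult_INR, plus_INR, mult_INR in Hlow. simpl in Hlow.
    assert (Hmu1 : (1 <= INR mu)%R) by (apply (le_INR 1); exact Hmu).
    apply (Rmult_le_reg_r (INR mu)); [lra|].
    unfold Rdiv. rewrite Rmult_assoc, Rinv_l, Rmult_1_r by lra. nra.
Qed.

Lemma quarter_square_bound (eps : R) (m h : nat) :
  (0 < eps)%R -> (1 < eps * INR h)%R -> (2 <= h)%nat -> (h <= 2 * m + 2)%nat ->
  ((/4 - eps) * INR h ^ 2 < INR m * INR m + INR m - 1)%R.
Proof.
  intros Heps Heh Hh2 Hhm.
  apply le_INR in Hh2. apply le_INR in Hhm.
  rewrite plus_INR, mult_INR in Hhm. simpl in Hh2, Hhm.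
  nra.
Qed.

Lemma eventually_eps_large (eps : R) :
  (0 < eps)%R -> exists H : nat, forall h : nat, (H <= h)%nat -> (1 < eps * INR h)%R.
Proof.
  intros Heps. destruct (INR_unbounded (/ eps)) as [H HH].
  exists H. intros h Hh. apply le_INR in Hh.
  apply (Rmult_lt_reg_l (/ eps)); [now apply Rinv_0_lt_compat|].
  rewrite <- Rmult_assoc, Rinv_l, Rmult_1_l, Rmult_1_r by lra. lra.
Qed.

Theorem proposition4p1 (mu : nat) (hmu : (1 <= mu)%nat) :
  forall eps : R, (0 < eps)%R ->
  exists H : nat, forall h : nat, (1 <= h)%nat -> (H <= h)%nat ->
    exists r : R, Xmu_value mu h r /\ ((/4 - eps) * (INR h)^2 < r)%R.
Proof.
  intros eps Heps.
  destruct (eventually_eps_large eps Heps) as [H0 HH0].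
  exists (H0 + 3)%nat. intros h _ Hh.
  (* Use the construction with the largest m such that 2m+1 <= h. *)
  set (m := ((h - 1) / 2)%nat).
  assert (Hm : (2 * m + 1 <= h <= 2 * m + 2)%nat).
  { pose proof (Nat.div_mod (h - 1) 2 ltac:(lia)).
    pose proof (Nat.mod_upper_bound (h - 1) 2 ltac:(lia)). unfold m. lia. }
  destruct (Xmu_value_construction mu m h hmu ltac:(lia) ltac:(lia)) as [r [Hr Hrm]].
  exists r. split; [exact Hr|].
  pose proof (quarter_square_bound eps m h Heps (HH0 h ltac:(lia)) ltac:(lia) ltac:(lia)).
  lra.
Qed.
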